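(* Let $\mu,\nu\in P_2^r(\mathbb{R}^d)$ and let $r$ be the unique optimal transport map for the 2-Wasserstein distance with $r_\#\mu=\nu$. Let $N\subset\mathbb{R}^d$ be a $\mu$-negligible set such that $\langle r(x_1)-r(x_2),x_1-x_2\rangle>0$ for all distinct $x_1,x_2\in\mathbb{R}^d\setminus N$. For $t\in[0,1]$ let $h_t(x)=(1-t)x+tr(x)$ and $\mu_t=(h_t)_\#\mu$. If $r$ is continuous and $\operatorname{supp}(\mu)\setminus N$ contains a nonempty open set, then every geodesic measure $\mu_t$, $t\in[0,1]$, is a probabilistic frame.
   Context: $P_2^r(\mathbb{R}^d)$ denotes the set of probability measures on $\mathbb{R}^d$ with finite second moment that are absolutely continuous with respect to Lebesgue measure. The optimal transport map $r$ is the map with $r_\#\mu=\nu$ minimizing $\int\|x-r(x)\|^2d\mu(x)$; such an $r$ exists, is unique $\mu$-a.e., and a $\mu$-negligible set $N$ as described exists. A probabilistic frame is a probability measure on $\mathbb{R}^d$ with finite second moment whose support spans $\mathbb{R}^d$. $\operatorname{supp}(\mu)$ is the set of points all of whose open neighborhoods have positive $\mu$-measure. *)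

From HB Require Import structures.
From mathcomp Require Import all_boot all_order all_algebra.
From mathcomp Require Import all_classical all_reals all_analysis.
Set Implicit Arguments. Unset Strict Implicit. Unset Printing Implicit Defensive.
Import Order.TTheory GRing.Theory Num.Theory.
Import numFieldNormedType.Exports.
Local Open Scope classical_set_scope.
Local Open Scope ring_scope.

(* R^d, represented by row vectors, with its usual (product/normed) topology
   and the Borel sigma-algebra generated by its open sets. *)
Definition Rd (R : realType) (d : nat) : Type :=
  g_sigma_algebraType (@open 'rV[R]_d).

Definition dotv (R : realType) (d : nat) (x y : 'rV[R]_d) : R :=
  \sum_(i < d) x ord0 i * y ord0 i.
Definition sqnorm (R : realType) (d : nat) (x : 'rV[R]_d) : R := dotv x x.

Definition box_vol (R : realType) (d : nat) (a b : 'rV[R]_d) : R :=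
  \prod_(i < d) (b ord0 i - a ord0 i).
Definition in_box (R : realType) (d : nat) (a b x : 'rV[R]_d) : Prop :=
  forall i : 'I_d, a ord0 i <= x ord0 i <= b ord0 i.
Definition lebesgue_null (R : realType) (d : nat) (A : set 'rV[R]_d) : Prop :=
  forall eps : R, 0 < eps ->
  exists (a b : nat -> 'rV[R]_d),
    (forall k, forall i : 'I_d, a k ord0 i <= b k ord0 i) /\
    (A `<=` \bigcup_k [set x | in_box (a k) (b k) x]) /\
    (\sum_(0 <= k <oo) (box_vol (a k) (b k))%:E <= eps%:E)%E.

Definition abs_cont (R : realType) (d : nat) (mu : set (Rd R d) -> \bar R) : Prop :=
  forall A : set (Rd R d), measurable A -> lebesgue_null A -> mu A = 0%E.

Definition finite_second_moment (R : realType) (d : nat)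
  (mu : {measure set (Rd R d) -> \bar R}) : Prop :=
  (\int[mu]_x (sqnorm (x : 'rV[R]_d))%:E < +oo)%E.

Definition P2r (R : realType) (d : nat) (mu : probability (Rd R d) R) : Prop :=
  abs_cont mu /\ finite_second_moment mu.

Definition pushes (R : realType) (d : nat) (T : Rd R d -> Rd R d)
  (mu nu : set (Rd R d) -> \bar R) : Prop :=
  measurable_fun [set: Rd R d] T /\
  forall A : set (Rd R d), measurable A -> nu A = mu (T @^-1` A).

Definition optimal_map (R : realType) (d : nat) (mu nu : probability (Rd R d) R)
  (r : Rd R d -> Rd R d) : Prop :=
  pushes r mu nu /\
  forall s : Rd R d -> Rd R d, pushes s mu nu ->
    (\int[mu]_x (sqnorm ((x : 'rV[R]_d) - r x))%:E
     <= \int[mu]_x (sqnorm ((x : 'rV[R]_d) - s x))%:E)%E.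

Definition msupp (R : realType) (d : nat) (mu : set (Rd R d) -> \bar R)
  : set 'rV[R]_d :=
  [set x | forall U : set 'rV[R]_d, open U -> U x -> (0 < mu U)%E].

Definition spans (R : realType) (d : nat) (S : set 'rV[R]_d) : Prop :=
  forall y : 'rV[R]_d, exists (n : nat) (c : 'I_n -> R) (v : 'I_n -> 'rV[R]_d),
    (forall i, S (v i)) /\ y = \sum_(i < n) c i *: v i.

Definition prob_frame (R : realType) (d : nat) (mu : probability (Rd R d) R) : Prop :=
  finite_second_moment mu /\ spans (msupp mu).

Definition interp (R : realType) (d : nat) (r : 'rV[R]_d -> 'rV[R]_d) (t : R)
  (x : 'rV[R]_d) : 'rV[R]_d := (1 - t) *: x + t *: r x.

From HB Require Import structures.
From mathcomp Require Import all_boot all_order all_algebra.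
From mathcomp Require Import all_classical all_reals all_analysis.
From mathcomp Require Import lra measurable_realfun.
Import Order.TTheory GRing.Theory Num.Theory.
Import numFieldNormedType.Exports.
Local Open Scope classical_set_scope.
Local Open Scope ring_scope.

(* Suppose w <> 0 were orthogonal to supp(mu_t).  Since h_t is continuous, it
   maps supp(mu) into supp(mu_t).  Take x in the open set U of supp(mu) \ N and
   x' = x + delta w still in U: then <h_t x' - h_t x, w> = 0, whereas h_t
   inherits from r the strict monotonicity off N, so
   <h_t x' - h_t x, delta w> > 0.  Hence supp(mu_t) lies in no hyperplane and
   therefore spans R^d.  The second moment of mu_t is finite by convexity of
   the squared norm: M_2(mu_t) <= (1 - t) M_2(mu) + t M_2(nu). *)

Lemma continuous_borel_measurable {T U : ptopologicalType} {f : T -> U} :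
  continuous f ->
  measurable_fun [set: g_sigma_algebraType (@open T)]
    (f : g_sigma_algebraType (@open T) -> g_sigma_algebraType (@open U)).
Proof.
move=> /continuousP cf; apply: measurability => //.
by move=> _ [B oB <-]; rewrite setTI; apply: sub_gen_smallest; exact: cf.
Qed.

Lemma continuous_borel_measurable_real {T : ptopologicalType} {R : realType}
    {f : T -> R} :
  continuous f ->
  measurable_fun [set: g_sigma_algebraType (@open T)]
    (f : g_sigma_algebraType (@open T) -> R).
Proof.
move=> /continuousP cf; apply: (measurability _ (RGenOpens.measurableE R)).
move=> _ [_ [a [b ->] <-]]; rewrite setTI.
by apply: sub_gen_smallest; apply: cf; exact: interval_open.
Qed.

Section InnerProduct.
Variables (R : realType) (d : nat).
Implicit Types (a b c : 'rV[R]_d) (k : R).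

Lemma dotvDl a b c : dotv (a + b) c = dotv a c + dotv b c.
Proof. by rewrite /dotv -big_split; apply: eq_bigr => i _; rewrite mxE mulrDl. Qed.

Lemma dotvNl a c : dotv (- a) c = - dotv a c.
Proof. by rewrite /dotv -sumrN; apply: eq_bigr => i _; rewrite mxE mulNr. Qed.

Lemma dotvBl a b c : dotv (a - b) c = dotv a c - dotv b c.
Proof. by rewrite dotvDl dotvNl. Qed.

Lemma dotvZl k a c : dotv (k *: a) c = k * dotv a c.
Proof. by rewrite /dotv mulr_sumr; apply: eq_bigr => i _; rewrite mxE mulrA. Qed.

Lemma dotvZr k a c : dotv a (k *: c) = k * dotv a c.
Proof. by rewrite /dotv mulr_sumr; apply: eq_bigr => i _; rewrite mxE mulrCA. Qed.

Lemma dotvv_ge0 a : 0 <= dotv a a.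
Proof. by apply: sumr_ge0 => i _; rewrite -expr2 sqr_ge0. Qed.

Lemma dotvv_gt0 a : a != 0 -> 0 < dotv a a.
Proof.
move=> /matrix0Pn[i [j aj]]; rewrite (ord1 i) in aj.
rewrite /dotv (bigD1 j) //= ltr_pwDl ?sumr_ge0 // => [|l _]; rewrite -expr2.
  by rewrite exprn_even_gt0.
exact: sqr_ge0.
Qed.

Lemma dotv_mulmx n a (M : 'M[R]_(d, n)) j : dotv a (col j M)^T = (a *m M) 0 j.
Proof. by rewrite /dotv !mxE; apply: eq_bigr => i _; rewrite !mxE. Qed.

Lemma orthogonal_rowspace n (A : 'M[R]_(n, d)) : (\rank A < d)%N ->
  exists2 w : 'rV[R]_d, w != 0 & forall u, (u <= A)%MS -> dotv u w = 0.
Proof.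
move=> rA; have : cokermx A != 0 by rewrite -mxrank_eq0 mxrank_coker subn_eq0 -ltnNge.
move=> /matrix0Pn[i [j Cij]]; exists (col j (cokermx A))^T.
  by apply: contraNneq Cij => /matrixP/(_ 0 i); rewrite !mxE => ->.
by move=> u; rewrite submxE dotv_mulmx => /eqP->; rewrite mxE.
Qed.

End InnerProduct.

Section Spanning.
Variables (R : realType) (d : nat) (V : set 'rV[R]_d).
Hypothesis V_not_orthogonal :
  forall w : 'rV[R]_d, w != 0 -> exists2 v, V v & dotv v w != 0.

Lemma rows_rank_geq k : (k <= d)%N ->
  exists n (A : 'M[R]_(n, d)), (forall i, V (row i A)) /\ (k <= \rank A)%N.
Proof.
elim: k => [_|k IH Hk]; first by exists 0%N, 0; split => // -[].
have [n [A [VA kA]]] := IH (ltnW Hk).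
have [|rA] := leqP k.+1 (\rank A); first by exists n, A.
have eA : \rank A = k by apply/eqP; rewrite eqn_leq kA -ltnS rA.
have [w w0 wA] := @orthogonal_rowspace _ _ _ A (leq_trans rA Hk).
have [v Vv vw] := V_not_orthogonal _ w0.
have nvA : ~~ (v <= A)%MS by apply: contra vw => /wA->.
exists (1 + n)%N, (col_mx v A); split.
  move=> i; case: (split_ordP i) => l ->; last by rewrite rowKd.
  rewrite rowKu; have -> : row l v = v by apply/rowP => b; rewrite mxE (ord1 l).
  exact: Vv.
rewrite -addsmxE -eA; apply: rank_ltmx; rewrite ltmxE addsmxSr /=.
by apply: contra nvA; exact: submx_trans (addsmxSl v A).
Qed.

Lemma spans_not_orthogonal : spans V.
Proof.
have [n [A [VA dA]]] := @rows_rank_geq d (leqnn d).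
have fA : row_full A by rewrite /row_full eqn_leq rank_leq_col dA.
move=> y; exists n, (fun i => (y *m pinvmx A) 0 i), (fun i => row i A); split => //.
by rewrite -mulmx_sum_row mulmxKpV // submx_full.
Qed.

End Spanning.

Section Interpolation.
Variables (R : realType) (d : nat) (r : 'rV[R]_d -> 'rV[R]_d).

Lemma continuous_interp t : continuous r -> continuous (interp r t).
Proof.
move=> cr x; apply: continuousD; apply: continuousZl_tmp; [exact: cvg_id|exact: cr].
Qed.

Lemma interpB t x1 x2 :
  interp r t x1 - interp r t x2 = (1 - t) *: (x1 - x2) + t *: (r x1 - r x2).
Proof. by rewrite /interp !scalerBr addrACA opprD. Qed.

Lemma interp_monotone t x1 x2 : 0 <= t <= 1 -> x1 != x2 ->
  0 < dotv (r x1 - r x2) (x1 - x2) ->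
  0 < dotv (interp r t x1 - interp r t x2) (x1 - x2).
Proof.
move=> /andP[t0 t1] x12 rpos; rewrite interpB dotvDl !dotvZl.
have : 0 < dotv (x1 - x2) (x1 - x2) by apply: dotvv_gt0; rewrite subr_eq0.
nra.
Qed.

End Interpolation.

Section SecondMoment.
Variables (R : realType) (d : nat).

Lemma measurable_sqnorm : measurable_fun [set: Rd R d] (@sqnorm R d : Rd R d -> R).
Proof.
apply: measurable_sum => i; apply: measurable_funM;
  apply: continuous_borel_measurable_real; exact: coord_continuous.
Qed.

Lemma sqnorm_convex (t : R) (x y : 'rV[R]_d) : 0 <= t <= 1 ->
  sqnorm ((1 - t) *: x + t *: y) <= (1 - t) * sqnorm x + t * sqnorm y.
Proof.
move=> /andP[t0 t1]; rewrite /sqnorm /dotv !mulr_sumr -big_split /=.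
apply: ler_sum => i _; rewrite !mxE.
have : 0 <= t * (1 - t) * (x ord0 i - y ord0 i) ^+ 2.
  by rewrite mulr_ge0 ?sqr_ge0 // mulr_ge0 // subr_ge0.
nra.
Qed.

Lemma integral_pushes {mu nu : {measure set (Rd R d) -> \bar R}}
    {s : Rd R d -> Rd R d} {f : Rd R d -> \bar R} :
  pushes s mu nu -> measurable_fun [set: Rd R d] f -> (forall y, 0 <= f y)%E ->
  (\int[mu]_x f (s x) = \int[nu]_y f y)%E.
Proof.
move=> [ms snu] mf f0.
rewrite [RHS](eq_measure_integral (pushforward mu s)) => [|A mA _]; last exact: snu.
by rewrite (ge0_integral_pushforward ms).
Qed.

Lemma finite_second_moment_interp (mu nu : probability (Rd R d) R)
    (r : Rd R d -> Rd R d) t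
    (mh : measurable_fun [set: Rd R d] (interp r t : Rd R d -> Rd R d)) :
  0 <= t <= 1 -> finite_second_moment mu -> finite_second_moment nu ->
  pushes r mu nu -> finite_second_moment (distribution mu (mfun_Sub (mem_set mh))).
Proof.
move=> t01 fmu fnu rnu; have [t0 t1] := andP t01.
have sq0 (x : 'rV[R]_d) : (0 <= (sqnorm x)%:E)%E by rewrite lee_fin dotvv_ge0.
have msq : measurable_fun [set: Rd R d] (fun x : Rd R d => (sqnorm x)%:E).
  by apply/measurable_EFinP; exact: measurable_sqnorm.
have msqr := measurableT_comp msq rnu.1.
rewrite /finite_second_moment ge0_integral_distribution //=.
apply: (@le_lt_trans _ _
  ((1 - t)%:E * \int[mu]_x (sqnorm x)%:E + t%:E * \int[nu]_x (sqnorm x)%:E)%E).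
  rewrite -(integral_pushes rnu) // -!ge0_integralZl_EFin ?subr_ge0 //.
  rewrite -ge0_integralD //; last 4 first.
  - by move=> x _; rewrite mule_ge0 // lee_fin subr_ge0.
  - exact: emeasurable_funM.
  - by move=> x _; rewrite mule_ge0.
  - exact: emeasurable_funM.
  apply: ge0_le_integral => //.
  - by apply/measurable_EFinP; apply: measurableT_comp measurable_sqnorm mh.
  - by apply: emeasurable_funD; exact: emeasurable_funM.
  - by move=> x _; rewrite -!EFinM -EFinD lee_fin sqnorm_convex.
by apply: lte_add_pinfty; apply: lte_mul_pinfty; rewrite // lee_fin subr_ge0.
Qed.

End SecondMoment.

Lemma open_ray_point {R : realType} {V : normedModType R} {U : set V} {x : V}
    (w : V) :
  open U -> U x -> exists2 delta : R, 0 < delta & U (x + delta *: w).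
Proof.
move=> oU Ux.
have cray : {for 0, continuous (fun s : R => x + s *: w)}.
  apply: continuousD; first exact: cst_continuous.
  by apply: continuousZr_tmp; exact: cvg_id.
have : nbhs (x + 0 *: w) U by rewrite scale0r addr0; exact: open_nbhs_nbhs.
move=> /cray /nbhs_ballP [e /= e0 eU]; exists (e / 2); first by rewrite divr_gt0.
apply: eU; rewrite -ball_normE /= sub0r normrN gtr0_norm ?divr_gt0 //.
by rewrite ltr_pdivrMr // ltr_pMr // ltr1n.
Qed.

Section Support.
Variables (R : realType) (d : nat) (mu : probability (Rd R d) R).
Variables (f : Rd R d -> Rd R d) (mf : measurable_fun [set: Rd R d] f).
Let mu_f := distribution mu (mfun_Sub (mem_set mf)).

Lemma msupp_distribution x :
  continuous (f : 'rV[R]_d -> 'rV[R]_d) -> msupp mu x -> msupp mu_f (f x).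
Proof. by move=> /continuousP cf mux V oV Vfx; apply: mux => //; exact: cf. Qed.

Lemma spans_msupp_distribution (U : set 'rV[R]_d) x0 :
  continuous (f : 'rV[R]_d -> 'rV[R]_d) -> open U -> U x0 -> U `<=` msupp mu ->
  (forall x1 x2, U x1 -> U x2 -> x1 != x2 -> 0 < dotv (f x1 - f x2) (x1 - x2)) ->
  spans (msupp mu_f).
Proof.
move=> cf oU Ux0 Umu fmono; apply: spans_not_orthogonal => w w0.
apply: contrapT => /forall2NP orth.
have {}orth v : msupp mu_f v -> dotv v w = 0.
  by move=> suppv; have [//|/negP/negbNE/eqP] := orth v.
have [delta delta0 Ux1] := open_ray_point w oU Ux0.
have x10 : x0 + delta *: w != x0.
  by rewrite -subr_eq0 addrC addKr scaler_eq0 negb_or w0 gt_eqF.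
have := fmono _ _ Ux1 Ux0 x10.
rewrite [X in dotv _ X]addrC addKr dotvZr dotvBl.
by rewrite !orth ?subrr ?mulr0 ?ltxx //; apply: msupp_distribution => //; exact: Umu.
Qed.

End Support.

Theorem mainTheorem13 (R : realType) (d : nat)
  (mu nu : probability (Rd R d) R) (r : Rd R d -> Rd R d) (N : set (Rd R d)) :
  P2r mu -> P2r nu ->
  optimal_map mu nu r ->
  mu.-negligible N ->
  (forall x1 x2 : 'rV[R]_d, ~ N x1 -> ~ N x2 -> x1 <> x2 ->
     0 < dotv (r x1 - r x2) (x1 - x2)) ->
  continuous (r : 'rV[R]_d -> 'rV[R]_d) ->
  (exists U : set 'rV[R]_d, open U /\ U !=set0 /\ U `<=` msupp mu `\` N) ->
  forall t : R, 0 <= t <= 1 ->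
    exists mut : probability (Rd R d) R,
      pushes (interp r t : Rd R d -> Rd R d) mu mut /\ prob_frame mut.
Proof.
move=> [_ fmu] [_ fnu] [rnu _] _ rmono cr [U [oU [[x0 Ux0] UsuppN]]] t t01.
have cht : continuous (interp r t) by exact: continuous_interp.
have mht : measurable_fun [set: Rd R d] (interp r t : Rd R d -> Rd R d).
  exact: continuous_borel_measurable.
exists (distribution mu (mfun_Sub (mem_set mht))); split; first by split.
split; first exact: (@finite_second_moment_interp _ _ mu nu r t mht).
apply: (@spans_msupp_distribution _ _ mu _ mht U x0 cht oU Ux0).
  by move=> x /UsuppN[].
move=> x1 x2 Ux1 Ux2 x12.
have [_ Nx1] := UsuppN _ Ux1; have [_ Nx2] := UsuppN _ Ux2.
by apply: interp_monotone => //; apply: rmono => //; exact/eqP.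
Qed.
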